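(* Let $n\ge2$ and let $\mathcal{C}([n])$ be the lattice of one-cluster partitions of $[n]$ ordered by refinement. Then for every $\pi\in\mathcal{C}([n])$, $$\mathfrak{m}(\pi,[n])=\begin{cases}(-1)^{n-1}(n-1)&\text{if }\pi=1|2|\cdots|n,\\(-1)^{|\pi|-1}&\text{otherwise},\end{cases}$$ where $|\pi|$ is the number of blocks of $\pi$.
   Context: A one-cluster partition of $[n]$ is a set partition with at most one block of size greater than one. The refinement order: $\pi\le\nu$ iff every block of $\pi$ is contained in a block of $\nu$. The Möbius function of a finite poset is defined by $\mathfrak{m}(\pi,\pi)=1$, $\mathfrak{m}(\pi,\nu)=-\sum_{\pi\le\delta<\nu}\mathfrak{m}(\pi,\delta)$ for $\pi<\nu$, and $0$ otherwise. *)

From mathcomp Require Import all_boot all_order all_algebra.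
Set Implicit Arguments. Unset Strict Implicit. Unset Printing Implicit Defensive.
Import GRing.Theory Num.Theory.

Definition set_partition (n : nat) (P : {set {set 'I_n}}) : bool :=
  partition P [set: 'I_n].

Definition one_cluster (n : nat) (P : {set {set 'I_n}}) : bool :=
  set_partition P && (#|[set B in P | 1 < #|B|]| <= 1).

Definition C_n (n : nat) : {set {set {set 'I_n}}} := [set P | one_cluster P].

Definition refines (n : nat) (P Q : {set {set 'I_n}}) : bool :=
  [forall B in P, exists C in Q, B \subset C].

Definition top_part (n : nat) : {set {set 'I_n}} := [set [set: 'I_n]].
Definition bot_part (n : nat) : {set {set 'I_n}} := [set [set i] | i : 'I_n].

(* Computed by recursion with fuel; fuel #|A|.+1 suffices since every
   recursive call strictly descends along a chain in A. *)
Fixpoint mob_rec (T : finType) (A : {set T}) (le : rel T) (k : nat) (x y : T) : int :=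
  match k with
  | 0 => 0%R
  | k'.+1 =>
    if x == y then 1%R
    else if le x y then
      (- (\sum_(d in A | le x d && le d y && (d != y)) mob_rec A le k' x d))%R
    else 0%R
  end.

Definition mobius (T : finType) (A : {set T}) (le : rel T) (x y : T) : int :=
  mob_rec A le #|A|.+1 x y.

From mathcomp Require Import all_boot all_order all_algebra ring.
Import GRing.Theory Num.Theory.
Set Implicit Arguments. Unset Strict Implicit. Unset Printing Implicit Defensive.

(* A one-cluster partition is determined by its cluster S, a subset of [n] with
   |S| <> 1 (S empty giving 1|2|...|n), and refinement becomes inclusion of
   clusters.  Above a cluster S with |S| >= 2 the poset is the Boolean lattice of
   supersets of S, so m(pi, [n]) = (-1)^(n - |S|) = (-1)^(|pi| - 1).  From the
   bottom, the candidate value (-1)^|T| (1 - |T|) at cluster T satisfies the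
   defining recursion: its sum over all subsets of U vanishes when |U| >= 2, and
   the singletons, which are not clusters, contribute 0 to that sum.  Both values
   are certified by the uniqueness of solutions of the Moebius recursion. *)

Section ClusterPartitions.
Variable n : nat.
Implicit Types (S T : {set 'I_n}) (P : {set {set 'I_n}}).

Definition cluster_block S (i : 'I_n) : {set 'I_n} := if i \in S then S else [set i].

(* The one-cluster partition with cluster S; every S with #|S| <= 1 yields the
   partition into singletons, hence the side conditions #|S| != 1 below. *)
Definition cluster_part S : {set {set 'I_n}} := [set cluster_block S i | i : 'I_n].

Definition cluster_of P : {set 'I_n} :=
  [set i | [exists B in P, (i \in B) && (1 < #|B|)]].

Lemma mem_cluster_block S i : i \in cluster_block S i.
Proof. by rewrite /cluster_block; case: ifP => // _; rewrite set11. Qed.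

Lemma cluster_blockP S i :
  cluster_block S i = S /\ i \in S \/ cluster_block S i = [set i] /\ i \notin S.
Proof. by rewrite /cluster_block; case: ifP => iS; [left|right]. Qed.

Lemma eq_cluster_block S i j :
  (cluster_block S i == cluster_block S j) = (j \in cluster_block S i).
Proof.
rewrite /cluster_block; case: ifP => iS; case: ifP => jS.
- by rewrite eqxx.
- by apply: contraFF jS => /eqP ->; rewrite set11.
- have ji : (j == i) = false by apply: contraFF iS => /eqP <-.
  by rewrite in_set1 ji; apply: contraFF iS => /eqP <-; rewrite set11.
- by rewrite (inj_eq set1_inj) in_set1 eq_sym.
Qed.

Lemma cluster_partE S : cluster_part S = preim_partition (cluster_block S) [set: 'I_n].
Proof.
apply/setP => B; apply/imsetP/imsetP => -[i _ ->]; exists i => //;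
  by apply/setP => j; rewrite !inE eq_cluster_block.
Qed.

Lemma cluster_part_in_C S : cluster_part S \in C_n n.
Proof.
rewrite inE /one_cluster /set_partition cluster_partE preim_partitionP -cluster_partE /=.
rewrite -(cards1 S) subset_leq_card //; apply/subsetP => B.
rewrite !inE => /andP[/imsetP[i _ ->]].
by case: (cluster_blockP S i) => -[-> _]; rewrite ?cards1 ?eqxx.
Qed.

Lemma mem_cluster_part S i : i \in S -> S \in cluster_part S.
Proof. by move=> iS; apply/imsetP; exists i => //; rewrite /cluster_block iS. Qed.

Lemma cluster_of_part S : #|S| != 1 -> cluster_of (cluster_part S) = S.
Proof.
move=> S1; apply/setP => i; rewrite inE; apply/existsP/idP => [[B]|iS].
  case/and3P=> /imsetP[j _ ->]; case: (cluster_blockP S j) => -[-> // _].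
  by rewrite cards1.
exists S; rewrite (mem_cluster_part iS) iS /=.
by rewrite ltn_neqAle eq_sym S1 card_gt0; apply/set0Pn; exists i.
Qed.

Lemma cluster_part_inj S T : #|S| != 1 -> #|T| != 1 ->
  (cluster_part S == cluster_part T) = (S == T).
Proof.
move=> S1 T1; apply/eqP/eqP => [ST|-> //].
by rewrite -(cluster_of_part S1) -(cluster_of_part T1) ST.
Qed.

Lemma cluster_block_subset S T i : S \subset T ->
  cluster_block S i \subset cluster_block T i.
Proof.
rewrite /cluster_block; case: ifP => [iS sST|_ _]; last by rewrite sub1set mem_cluster_block.
by rewrite (subsetP sST _ iS).
Qed.

Lemma refines_cluster_part S T : #|S| != 1 ->
  refines (cluster_part S) (cluster_part T) = (S \subset T).
Proof.
move=> S1; apply/forall_inP/idP => [ref|sST _ /imsetP[i _ ->]]; last first.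
  by apply/existsP; exists (cluster_block T i); rewrite imset_f ?cluster_block_subset.
have [->|/set0Pn[i iS]] := eqVneq S set0; first exact: sub0set.
have /existsP[C /andP[/imsetP[j _ ->]]] := ref _ (mem_cluster_part iS).
case: (cluster_blockP T j) => -[-> // _].
rewrite subset1 => /orP[/eqP S1j|/eqP S0]; last by rewrite S0 inE in iS.
by rewrite S1j cards1 in S1.
Qed.

Lemma cluster_part_split S : S != set0 ->
  cluster_part S = S |: [set [set i] | i in ~: S].
Proof.
case/set0Pn=> x xS; apply/setP => B; rewrite !inE.
apply/imsetP/orP => [[i _ ->]|[/eqP->|/imsetP[i]]].
- case: (cluster_blockP S i) => -[-> iS]; [left|right] => //.
  by rewrite imset_f // inE.
- by exists x; rewrite // /cluster_block xS.
- by rewrite inE => iS ->; exists i; rewrite // /cluster_block (negbTE iS).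
Qed.

Lemma card_cluster_part S : 1 < #|S| -> #|cluster_part S| = #|~: S|.+1.
Proof.
move=> S2; have S0 : S != set0 by rewrite -card_gt0 ltnW.
rewrite cluster_part_split // cardsU1 card_imset; last exact: set1_inj.
suff /negPf-> : S \notin [set [set i] | i in ~: S] by [].
by apply/imsetP => -[i _ Si]; rewrite Si cards1 in S2.
Qed.

Lemma bot_partE : bot_part n = cluster_part set0.
Proof. by apply: eq_imset => i; rewrite /cluster_block inE. Qed.

Lemma top_partE : 0 < n -> top_part n = cluster_part setT.
Proof.
move=> n0; have T0 : [set: 'I_n] != set0 by apply/set0Pn; exists (Ordinal n0).
by rewrite cluster_part_split // setCT imset0 setU0.
Qed.

Section OneCluster.
Variable P : {set {set 'I_n}}.
Hypothesis PC : P \in C_n n.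

Let partP : partition P [set: 'I_n].
Proof. by move: PC; rewrite inE => /andP[]. Qed.

Let coverP j : j \in cover P.
Proof. by case/and3P: partP => /eqP->. Qed.

Let trivP : trivIset P.
Proof. by case/and3P: partP. Qed.

Let big_block_uniq B1 B2 : B1 \in P -> B2 \in P -> 1 < #|B1| -> 1 < #|B2| -> B1 = B2.
Proof.
move: PC; rewrite inE => /andP[_ /card_le1_eqP le1] B1P B2P B1big B2big.
by apply: le1; rewrite inE ?B1P ?B2P.
Qed.

Lemma mem_cluster_of j : (j \in cluster_of P) = (1 < #|pblock P j|).
Proof.
rewrite inE; apply/existsP/idP => [[B /and3P[BP jB]]|big].
  by rewrite (def_pblock trivP BP jB).
by exists (pblock P j); rewrite pblock_mem // mem_pblock coverP.
Qed.

Lemma pblock_one_cluster j : pblock P j = cluster_block (cluster_of P) j.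
Proof.
rewrite /cluster_block mem_cluster_of; case: ltnP => [big|small].
  apply/setP => i; rewrite mem_cluster_of; apply/idP/idP => [ij|ibig].
    by rewrite (same_pblock trivP ij).
  by rewrite -(big_block_uniq (pblock_mem (coverP i)) (pblock_mem (coverP j)) ibig big)
    mem_pblock.
by apply/eqP; rewrite eq_sym eqEcard cards1 small sub1set mem_pblock coverP.
Qed.

Lemma one_clusterP : exists2 U : {set 'I_n}, #|U| != 1 & P = cluster_part U.
Proof.
exists (cluster_of P).
  apply/cards1P => -[x Ux].
  have := set11 x; rewrite -Ux mem_cluster_of pblock_one_cluster Ux.
  by rewrite /cluster_block set11 cards1.
rewrite cluster_partE -{1}(preim_partition_pblock partP).
apply: eq_imset => i; apply/setP => j.
by rewrite !inE !pblock_one_cluster.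
Qed.

End OneCluster.
End ClusterPartitions.

Local Open Scope ring_scope.

Section MobiusCharacterization.
Variables (T : finType) (A : {set T}) (le : rel T).
Hypothesis le_reflA : {in A, forall a, le a a}.
Hypothesis le_transA : {in A & &, forall a b c, le a b -> le b c -> le a c}.
Hypothesis le_antiA : {in A &, forall a b, le a b -> le b a -> a = b}.

Definition card_below (y : T) := #|[set e in A | le e y && (e != y)]|.

Lemma card_below_lt d y : d \in A -> y \in A -> le d y -> d != y ->
  (card_below d < card_below y)%N.
Proof.
move=> dA yA ldy ndy; apply: proper_card; apply/properP; split.
  apply/subsetP => e; rewrite !inE => /and3P[eA led ned].
  rewrite eA (le_transA eA dA yA led ldy); apply: contra_neq ned => ey.
  by apply: le_antiA => //; rewrite ey.
by exists d; rewrite !inE ?dA ?ldy ?ndy ?eqxx // andbF.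
Qed.

Lemma card_below_le y : (card_below y <= #|A|)%N.
Proof. by apply: subset_leq_card; apply/subsetP => e; rewrite inE => /andP[]. Qed.

Lemma mob_rec_fuel x k y : y \in A -> (card_below y < k)%N ->
  mob_rec A le k x y = mob_rec A le k.+1 x y.
Proof.
elim: k y => [//|k IH] y yA yk /=.
case: (x == y) => //; case: (le x y) => //; congr (- _).
apply: eq_bigr => d /andP[dA /andP[/andP[_ ldy] ndy]].
by apply: IH => //; apply: leq_trans (card_below_lt dA yA ldy ndy) yk.
Qed.

Lemma mobiusE x y : y \in A ->
  mobius A le x y = if x == y then 1 else if le x y then
    - \sum_(d in A | le x d && le d y && (d != y)) mobius A le x d else 0.
Proof.
move=> yA; rewrite /mobius /=.
case: (x == y) => //; case: (le x y) => //; congr (- _).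
apply: eq_bigr => d /andP[dA /andP[/andP[_ ldy] ndy]].
by apply: mob_rec_fuel => //; apply: leq_trans (card_below_lt dA yA ldy ndy) (card_below_le y).
Qed.

Lemma mobius_unique x (f : T -> int) : x \in A -> f x = 1 ->
    (forall y, y \in A -> le x y -> x != y -> \sum_(d in A | le x d && le d y) f d = 0) ->
  forall y, y \in A -> le x y -> mobius A le x y = f y.
Proof.
move=> xA fx1 sum_f0 y; have [k] := ubnP (card_below y).
elim: k y => // k IH y yk yA lxy; rewrite mobiusE //.
have [<-|nxy] := eqVneq x y; first by rewrite fx1.
have := sum_f0 y yA lxy nxy; rewrite lxy (bigD1 y) /= ?yA ?lxy ?le_reflA //.
move/eqP; rewrite addr_eq0 => /eqP->; congr (- _).
apply: eq_big => [d|d /andP[dA /andP[/andP[lxd ldy] ndy]]]; first by rewrite andbA.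
by apply: IH; rewrite // (leq_trans (card_below_lt dA yA ldy ndy)).
Qed.

End MobiusCharacterization.

(* m(0, pi) for a cluster of size k; note that it vanishes at k = 1. *)
Definition bot_weight (k : nat) : int := (-1) ^+ k * (1 - k%:Z).

Lemma bot_weightS k : bot_weight k.+1 = (-1) ^+ k * k%:Z.
Proof. by rewrite /bot_weight exprS -addn1 PoszD; ring. Qed.

Section SubsetSums.
Variable T : finType.
Implicit Types (S R U : {set T}).

Lemma sum_subset_interval_split (F : {set T} -> int) S R r : r \in R -> r \notin S ->
  \sum_(U : {set T} | (S \subset U) && (U \subset R)) F U =
  \sum_(U : {set T} | (S \subset U) && (U \subset R :\ r)) (F U + F (r |: U)).
Proof.
move=> rR rS; rewrite (bigID (fun U => r \in U)) /= addrC big_split /=.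
congr (_ + _); first by apply: eq_bigl => U; rewrite subsetD1 andbA.
rewrite (reindex_onto (fun U => r |: U) (fun U => U :\ r)) /=; last first.
  by move=> U /andP[_ rU]; rewrite setD1K.
apply: eq_bigl => U; rewrite setU11 andbT.
have [rU|rU] := boolP (r \in U).
  have /negbTE-> : (r |: U) :\ r != U.
    by apply/eqP => rUK; have := setD11 r (r |: U); rewrite rUK rU.
  by rewrite subsetD1 rU !andbF.
rewrite setU1K // eqxx andbT subsetD1 rU andbT subUset sub1set rR /=.
congr (_ && _); apply/idP/idP => [sSrU|sSU]; last exact: subset_trans sSU (subsetU1 _ _).
apply/subsetP => x xS; move: (subsetP sSrU x xS); rewrite !inE.
by case: eqP => [xr|//]; rewrite -xr xS in rS.
Qed.

Lemma sum_alt_subset_interval S R : S \subset R -> S != R ->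
  \sum_(U : {set T} | (S \subset U) && (U \subset R)) (-1) ^+ #|U :\: S| = 0%R :> int.
Proof.
move=> sSR nSR; have /set0Pn[r] : R :\: S != set0.
  by apply: contraNneq nSR => /eqP; rewrite setD_eq0 => sRS; rewrite eqEsubset sSR.
rewrite inE => /andP[rS rR]; rewrite (sum_subset_interval_split _ rR rS) big1 // => U.
rewrite subsetD1 => /and3P[_ _ rU].
have -> : (r |: U) :\: S = r |: (U :\: S) by rewrite setDUl (setDidPl _) ?disjoints1.
by rewrite cardsU1 inE (negbTE rU) andbF exprS mulN1r addrN.
Qed.

Lemma sum_bot_weight_subsets R : (1 < #|R|)%N ->
  \sum_(U : {set T} | (set0 \subset U) && (U \subset R)) bot_weight #|U| = 0.
Proof.
move=> R2; have /set0Pn[r rR] : R != set0 by rewrite -card_gt0 ltnW.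
rewrite (sum_subset_interval_split _ rR (negbT (in_set0 r))).
rewrite (eq_bigr (fun U => (-1) ^+ #|U :\: set0|)) => [|U]; last first.
  rewrite subsetD1 setD0 => /and3P[_ _ rU].
  by rewrite cardsU1 rU add1n /bot_weight exprS -addn1 PoszD; ring.
apply: sum_alt_subset_interval; first exact: sub0set.
by apply: contraTneq R2 => R0; rewrite (cardsD1 r R) rR -R0 cards0.
Qed.

End SubsetSums.

Section OneClusterMobius.
Variable n : nat.
Implicit Types (S T U : {set 'I_n}) (P Q R : {set {set 'I_n}}).

Lemma refines_refl P : refines P P.
Proof. by apply/forall_inP => B BP; apply/existsP; exists B; rewrite BP subxx. Qed.

Lemma refines_trans P Q R : refines P Q -> refines Q R -> refines P R.
Proof.
move=> /forall_inP PQ /forall_inP QR; apply/forall_inP => B /PQ/existsP[C /andP[/QR]].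
by case/existsP=> D /andP[DR CD] BC; apply/existsP; exists D; rewrite DR (subset_trans BC CD).
Qed.

Lemma refines_anti : {in C_n n &, forall P Q, refines P Q -> refines Q P -> P = Q}.
Proof.
move=> _ _ /one_clusterP[S S1 ->] /one_clusterP[T T1 ->].
rewrite !refines_cluster_part // => sST sTS.
by congr cluster_part; apply/eqP; rewrite eqEsubset sST sTS.
Qed.

Let mobius_C_unique :=
  mobius_unique (in1W refines_refl) (in3W refines_trans) refines_anti.

Lemma C_nE : C_n n = @cluster_part n @: [set S : {set 'I_n} | #|S| != 1].
Proof.
apply/setP => P; apply/idP/imsetP => [/one_clusterP[S S1 ->]|[S _ ->]].
  by exists S; rewrite ?inE.
exact: cluster_part_in_C.
Qed.

Lemma sum_refines_interval (F : {set 'I_n} -> int) S T : #|S| != 1 ->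
  \sum_(P in C_n n | refines (cluster_part S) P && refines P (cluster_part T))
    F (cluster_of P) =
  \sum_(U : {set 'I_n} | (S \subset U) && (U \subset T) && (#|U| != 1)) F U.
Proof.
move=> S1; rewrite big_mkcondr C_nE big_imset /=; last first.
  by move=> U V; rewrite !inE => U1 V1 /eqP; rewrite cluster_part_inj // => /eqP.
rewrite big_mkcond [RHS]big_mkcond; apply: eq_bigr => U _; rewrite inE.
have [U1|_] := boolP (#|U| != 1); last by rewrite andbF.
by rewrite andbT (refines_cluster_part _ S1) (refines_cluster_part _ U1) andbC cluster_of_part.
Qed.

Lemma mobius_cluster_interval S T : (1 < #|S|)%N -> S \subset T ->
  mobius (C_n n) (@refines n) (cluster_part S) (cluster_part T) = (-1) ^+ #|T :\: S|.
Proof.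
move=> S2 sST; have big_sup U : S \subset U -> #|U| != 1.
  by move=> sSU; rewrite neq_ltn (leq_trans S2 (subset_leq_card sSU)) orbT.
have S1 := big_sup S (subxx S); have T1 := big_sup T sST.
rewrite (@mobius_C_unique _ (fun P => (-1) ^+ #|cluster_of P :\: S|)) ?cluster_part_in_C
  ?refines_cluster_part ?cluster_of_part ?setDv ?cards0 //.
move=> _ /one_clusterP[U U1 ->]; rewrite refines_cluster_part // cluster_part_inj // => sSU nSU.
rewrite (sum_refines_interval (fun V => (-1) ^+ #|V :\: S|)) //.
rewrite -[RHS](sum_alt_subset_interval sSU nSU).
by apply: eq_bigl => V; apply/andb_idr => /andP[/big_sup].
Qed.

Lemma mobius_bot_cluster T : #|T| != 1 ->
  mobius (C_n n) (@refines n) (cluster_part set0) (cluster_part T) = bot_weight #|T|.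
Proof.
have set0_1 : #|@set0 'I_n| != 1 by rewrite cards0.
move=> T1; rewrite (@mobius_C_unique _ (fun P => bot_weight #|cluster_of P|))
  ?cluster_part_in_C ?refines_cluster_part ?cluster_of_part ?sub0set ?cards0 //.
move=> _ /one_clusterP[U U1 ->]; rewrite cluster_part_inj // => _ U0.
have U2 : (1 < #|U|)%N by rewrite ltn_neqAle eq_sym U1 card_gt0 eq_sym.
rewrite (sum_refines_interval (fun V => bot_weight #|V|)) //.
rewrite -[RHS](sum_bot_weight_subsets U2) [RHS](bigID (fun V : {set 'I_n} => #|V| != 1)) /=.
by rewrite [X in _ + X]big1 ?addr0 // => V /andP[_ /negPn/eqP->]; rewrite bot_weightS mulr0.
Qed.

End OneClusterMobius.

Theorem mainTheorem11 (n : nat) (hn : (2 <= n)%N)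
  (pi : {set {set 'I_n}}) (hpi : pi \in C_n n) :
  mobius (C_n n) (@refines n) pi (top_part n) =
  (if pi == bot_part n then (-1) ^+ (n - 1) * (n - 1)%:Z
   else (-1) ^+ (#|pi| - 1)).
Proof.
have [S S1 ->] := one_clusterP hpi.
have n0 : (0 < n)%N by apply: leq_trans hn.
rewrite top_partE // bot_partE cluster_part_inj ?cards0 //.
have [->|S0] := eqVneq S set0.
  rewrite mobius_bot_cluster cardsT card_ord; last by rewrite neq_ltn hn orbT.
  by rewrite -[in bot_weight _](subnK n0) addn1 bot_weightS.
have S2 : (1 < #|S|)%N by rewrite ltn_neqAle eq_sym S1 card_gt0.
by rewrite mobius_cluster_interval ?subsetT // card_cluster_part // setTD subn1.
Qed.
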